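(* Every quasi-Polish space is a convergent approximation space.
   Context: A quasi-metric on a set $E$ is a map $d:E^2\to[0,+\infty)$ with $x=y\iff d(x,y)=d(y,x)=0$ and $d(x,z)\le d(x,y)+d(y,z)$; its topology is generated by the open balls $\{y: d(x,y)<r\}$. A sequence $(x_n)$ is Cauchy if $\lim_n\sup_{p\ge n}d(x_n,x_p)=0$; $(E,d)$ is complete if every Cauchy sequence converges for the metric $\hat d(x,y)=\max(d(x,y),d(y,x))$. A quasi-Polish space is a topological space with a countable basis whose topology is induced by a complete quasi-metric. Approximation relation: a binary relation $\ll$ on a topological basis $\mathcal{B}$ such that for all $U,V,T\in\mathcal{B}$: (1) $U\ll V\Rightarrow V\subseteq U$; (2) $U\subseteq T$ and $U\ll V$ imply $T\ll V$; (3) for every $x\in U$ there is $W\in\mathcal{B}$ with $x\in W$ and $U\ll W$; (4$^+$) every sequence $(U_i)_{i\in\mathbb{N}}$ in $\mathcal{B}$ with $U_i\ll U_{i+1}$ for all $i$ is a neighborhood basis of some point $x\in\bigcap_i U_i$. A convergent approximation space is a space admitting such a relation (conditions (1),(2),(3),(4$^+$)). *)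

From Stdlib Require Export Reals.
Open Scope R_scope.

Definition subset {X : Type} (A B : X -> Prop) : Prop := forall x, A x -> B x.

Definition is_topology {X : Type} (open : (X -> Prop) -> Prop) : Prop :=
  open (fun _ => True) /\
  (forall U V, open U -> open V -> open (fun x => U x /\ V x)) /\
  (forall (F : (X -> Prop) -> Prop), (forall U, F U -> open U) ->
     open (fun x => exists U, F U /\ U x)).

Definition is_basis {X : Type} (open : (X -> Prop) -> Prop)
  (B : (X -> Prop) -> Prop) : Prop :=
  (forall U, B U -> open U) /\
  (forall U x, open U -> U x -> exists W, B W /\ W x /\ subset W U).

Definition countable_family {X : Type} (B : (X -> Prop) -> Prop) : Prop :=
  exists f : (X -> Prop) -> nat,
    forall U V, B U -> B V -> f U = f V -> U = V.

Definition second_countable {X : Type} (open : (X -> Prop) -> Prop) : Prop :=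
  exists B, is_basis open B /\ countable_family B.

Definition is_quasi_metric {X : Type} (d : X -> X -> R) : Prop :=
  (forall x y, 0 <= d x y) /\
  (forall x y, x = y <-> (d x y = 0 /\ d y x = 0)) /\
  (forall x y z, d x z <= d x y + d y z).

Definition qball {X : Type} (d : X -> X -> R) (x : X) (r : R) : X -> Prop :=
  fun y => d x y < r.

Definition qm_open {X : Type} (d : X -> X -> R) (U : X -> Prop) : Prop :=
  forall x, U x -> exists z r, qball d z r x /\ subset (qball d z r) U.

Definition qm_cauchy {X : Type} (d : X -> X -> R) (u : nat -> X) : Prop :=
  forall eps, 0 < eps -> exists N, forall n p, (N <= n)%nat -> (n <= p)%nat ->
    d (u n) (u p) <= eps.

Definition dhat_converges {X : Type} (d : X -> X -> R) (u : nat -> X) (l : X)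
  : Prop :=
  forall eps, 0 < eps -> exists N, forall n, (N <= n)%nat ->
    Rmax (d (u n) l) (d l (u n)) < eps.

Definition qm_complete {X : Type} (d : X -> X -> R) : Prop :=
  forall u, qm_cauchy d u -> exists l, dhat_converges d u l.

Definition quasi_polish {X : Type} (open : (X -> Prop) -> Prop) : Prop :=
  second_countable open /\
  exists d : X -> X -> R, is_quasi_metric d /\ qm_complete d /\
    (forall U, open U <-> qm_open d U).

Definition nbhd_basis_seq {X : Type} (open : (X -> Prop) -> Prop)
  (U : nat -> X -> Prop) (x : X) : Prop :=
  (forall i, exists V, open V /\ V x /\ subset V (U i)) /\
  (forall V, open V -> V x -> exists i, subset (U i) V).

(* Approximation relation on a basis B satisfying (1),(2),(3),(4+). *)
Definition convergent_approx_relation {X : Type} (open : (X -> Prop) -> Prop)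
  (B : (X -> Prop) -> Prop) (ll : (X -> Prop) -> (X -> Prop) -> Prop) : Prop :=
  (forall U V, B U -> B V -> ll U V -> subset V U) /\
  (forall U V T, B U -> B V -> B T -> subset U T -> ll U V -> ll T V) /\
  (forall U x, B U -> U x -> exists W, B W /\ W x /\ ll U W) /\
  (forall Us : nat -> X -> Prop, (forall i, B (Us i)) ->
     (forall i, ll (Us i) (Us (S i))) ->
     exists x, (forall i, Us i x) /\ nbhd_basis_seq open Us x).

Definition convergent_approx_space {X : Type} (open : (X -> Prop) -> Prop)
  : Prop :=
  exists B ll, is_basis open B /\ convergent_approx_relation open B ll.

From Stdlib Require Import Reals Lra Lia Classical IndefiniteDescription.
Open Scope R_scope.

(* Let d be a complete quasi-metric inducing the topology and let (C k)_k be
   an enumeration of a countable basis; all we use of it is that the C k are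
   open and separate points at positive distance: if 0 < d x z then some C k
   contains x but not z.  On the basis of all open sets put U << V when there
   are a centre y and a radius e > 0 with V inside the ball B(y,e), the ball
   B(y,2e) inside U, and either V lies at distance 0 from y, or some C k
   contains V but not U and e <= 2^-k.  Properties (1) and (2) are immediate;
   (3) takes a small ball around x, using a separating C k when there is one
   and otherwise the whole of U, which then lies at distance 0 from x.  For
   (4+), along a chain U_0 << U_1 << ... each index k separates at most one
   step, so the radii tend to 0; the centres form a Cauchy sequence whose
   limit lies in every U_i, and the U_i shrink into every ball around it. *)

Section QuasiMetric.
Variable X : Type.
Variable d : X -> X -> R.
Hypothesis Hqm : is_quasi_metric d.

Lemma d_nonneg x y : 0 <= d x y.
Proof. destruct Hqm as [H _]; exact (H x y). Qed.

Lemma d_refl x : d x x = 0.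
Proof. destruct Hqm as [_ [H _]]; exact (proj1 (proj1 (H x x) eq_refl)). Qed.

Lemma d_tri x y z : d x z <= d x y + d y z.
Proof. destruct Hqm as [_ [_ H]]; exact (H x y z). Qed.

Lemma qm_open_ball_around U x :
  qm_open d U -> U x -> exists delta, 0 < delta /\ subset (qball d x delta) U.
Proof.
  intros HU Ux. destruct (HU x Ux) as [z [r [Hx Hsub]]].
  unfold qball in Hx. exists (r - d z x). split; [lra|].
  intros w Hw. apply Hsub. unfold qball in *. pose proof (d_tri z x w). lra.
Qed.

End QuasiMetric.

Lemma qm_open_ball {X : Type} (d : X -> X -> R) x r : qm_open d (qball d x r).
Proof. intros z Hz. exists x, r. split; [exact Hz | intros w Hw; exact Hw]. Qed.

Lemma qm_open_union {X : Type} (d : X -> X -> R) (F : (X -> Prop) -> Prop) :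
  (forall W, F W -> qm_open d W) -> qm_open d (fun x => exists W, F W /\ W x).
Proof.
  intros HF x [W [FW Wx]]. destruct (HF W FW x Wx) as [z [r [Hx Hsub]]].
  exists z, r. split; [exact Hx|]. intros w Hw. exists W. split; [exact FW | apply Hsub, Hw].
Qed.

(* Indexing a countable basis by natural numbers: C k is the (at most one)
   basic set of code k. *)
Section CodeSets.
Variable X : Type.
Variable d : X -> X -> R.
Hypothesis Hqm : is_quasi_metric d.
Variable B0 : (X -> Prop) -> Prop.
Variable code : (X -> Prop) -> nat.

Definition code_set (k : nat) : X -> Prop :=
  fun z => exists W, (B0 W /\ code W = k) /\ W z.

Lemma code_set_open k : (forall W, B0 W -> qm_open d W) -> qm_open d (code_set k).
Proof.
  intro HB0. apply (qm_open_union d (fun W => B0 W /\ code W = k)).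
  intros W [BW _]. exact (HB0 W BW).
Qed.

Lemma code_set_separates :
  (forall U x, qm_open d U -> U x -> exists W, B0 W /\ W x /\ subset W U) ->
  (forall U V, B0 U -> B0 V -> code U = code V -> U = V) ->
  forall x z, 0 < d x z -> exists k, code_set k x /\ ~ code_set k z.
Proof.
  intros Hbasis Hinj x z Hxz.
  destruct (Hbasis (qball d x (d x z)) x (qm_open_ball d x _))
    as [W [BW [Wx Wball]]].
  { unfold qball. rewrite (d_refl X d Hqm). exact Hxz. }
  exists (code W). split; [exists W; auto|].
  intros [W' [[BW' Hcode] W'z]].
  rewrite (Hinj W' W BW' BW Hcode) in W'z.
  specialize (Wball z W'z). unfold qball in Wball. lra.
Qed.

End CodeSets.

Lemma eventually_avoids (hit : nat -> nat -> Prop) :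
  (forall i j k, hit i k -> hit j k -> i = j) ->
  forall M, exists N, forall i, (N <= i)%nat -> forall k, (k < M)%nat -> ~ hit i k.
Proof.
  intros Huniq M. induction M as [|M [N HN]].
  - exists 0%nat. intros i _ k Hk. lia.
  - destruct (classic (exists i, hit i M)) as [[i0 Hi0] | Hnone].
    + exists (Nat.max N (S i0)). intros i Hi k Hk Hik.
      destruct (Nat.eq_dec k M) as [-> | Hne].
      * pose proof (Huniq _ _ _ Hik Hi0). lia.
      * exact (HN i ltac:(lia) k ltac:(lia) Hik).
    + exists N. intros i Hi k Hk Hik.
      destruct (Nat.eq_dec k M) as [-> | Hne].
      * apply Hnone. exists i. exact Hik.
      * exact (HN i Hi k ltac:(lia) Hik).
Qed.

Section Approximation.
Variable X : Type.
Variable d : X -> X -> R.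
Hypothesis Hqm : is_quasi_metric d.
Variable C : nat -> X -> Prop.

Definition splits (k : nat) (U V : X -> Prop) : Prop :=
  subset V (C k) /\ ~ subset U (C k).

Definition approx_at (U V : X -> Prop) (y : X) (e : R) : Prop :=
  0 < e /\ subset V (qball d y e) /\ subset (qball d y (2 * e)) U /\
  (subset V (fun z => d y z = 0) \/ exists k, splits k U V /\ e <= (1/2) ^ k).

Definition approx (U V : X -> Prop) : Prop := exists y e, approx_at U V y e.

Lemma approx_at_subset U V y e : approx_at U V y e -> subset V U.
Proof.
  intros [He [HV [HU _]]] z Vz. apply HU. specialize (HV z Vz). unfold qball in *. lra.
Qed.

Lemma approx_subset U V : approx U V -> subset V U.
Proof. intros [y [e H]]. exact (approx_at_subset U V y e H). Qed.

Lemma approx_enlarge U V T : subset U T -> approx U V -> approx T V.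
Proof.
  intros HUT [y [e [He [HV [HU Hk]]]]]. exists y, e.
  split; [exact He|]. split; [exact HV|]. split.
  - intros z Hz. apply HUT, HU, Hz.
  - destruct Hk as [Hzero | [k [[HVk HUk] Hek]]]; [left; exact Hzero | right].
    exists k. split; [split; [exact HVk|] | exact Hek].
    intro HTk. apply HUk. intros z Hz. apply HTk, HUT, Hz.
Qed.

Lemma unseparated_distance_zero U x :
  (forall x z, 0 < d x z -> exists k, C k x /\ ~ C k z) ->
  (forall k, C k x -> subset U (C k)) -> subset U (fun z => d x z = 0).
Proof.
  intros Hsep Hnosplit z Uz.
  destruct (Rle_lt_or_eq_dec 0 (d x z) (d_nonneg X d Hqm x z)) as [Hpos | Hzero];
    [exfalso | auto].
  destruct (Hsep x z Hpos) as [k [Ckx Ckz]]. exact (Ckz (Hnosplit k Ckx z Uz)).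
Qed.

Lemma approx_interpolate U x :
  (forall k, qm_open d (C k)) ->
  (forall x z, 0 < d x z -> exists k, C k x /\ ~ C k z) ->
  qm_open d U -> U x -> exists W, qm_open d W /\ W x /\ approx U W.
Proof.
  intros HCopen Hsep HU Ux.
  destruct (qm_open_ball_around X d Hqm U x HU Ux) as [dU [HdU HballU]].
  destruct (classic (exists k, C k x /\ ~ subset U (C k))) as [[k [Ckx HUk]] | Hnone].
  - destruct (qm_open_ball_around X d Hqm (C k) x (HCopen k) Ckx) as [dC [HdC HballC]].
    pose proof (pow_lt (1/2) k ltac:(lra)) as Hpow.
    set (e := Rmin dC (Rmin (dU / 2) ((1/2) ^ k))).
    assert (HeC : e <= dC) by apply Rmin_l.
    assert (HeU : e <= dU / 2)
      by (pose proof (Rmin_r dC (Rmin (dU / 2) ((1/2) ^ k))); pose proof (Rmin_l (dU / 2) ((1/2) ^ k)); unfold e; lra).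
    assert (Hek : e <= (1/2) ^ k)
      by (pose proof (Rmin_r dC (Rmin (dU / 2) ((1/2) ^ k))); pose proof (Rmin_r (dU / 2) ((1/2) ^ k)); unfold e; lra).
    assert (He : 0 < e) by (unfold e; repeat apply Rmin_pos; lra).
    exists (qball d x e). split; [apply qm_open_ball|].
    split; [unfold qball; rewrite (d_refl X d Hqm); exact He|].
    exists x, e. split; [exact He|]. split; [intros z Hz; exact Hz|]. split.
    + intros z Hz. apply HballU. unfold qball in *. lra.
    + right. exists k. split; [split; [|exact HUk] | exact Hek].
      intros z Hz. apply HballC. unfold qball in *. lra.
  - assert (Hzero : subset U (fun z => d x z = 0)).
    { apply unseparated_distance_zero; [exact Hsep|].
      intros k Ckx. apply NNPP. intro HUk. apply Hnone. exists k. auto. }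
    exists U. split; [exact HU|]. split; [exact Ux|].
    exists x, (dU / 2). split; [lra|]. split.
    + intros z Uz. unfold qball. rewrite (Hzero z Uz). lra.
    + split; [intros z Hz; apply HballU; unfold qball in *; lra | left; exact Hzero].
Qed.

Section Chain.
Variable Us : nat -> X -> Prop.
Variable Y : nat -> X.
Variable E : nat -> R.
Hypothesis Hchain : forall i, approx_at (Us i) (Us (S i)) (Y i) (E i).

Lemma chain_nested i j : (i <= j)%nat -> subset (Us j) (Us i).
Proof.
  intro Hij. induction Hij as [|j _ IH]; intros z Hz; [exact Hz|].
  apply IH. exact (approx_at_subset _ _ _ _ (Hchain j) z Hz).
Qed.

Lemma chain_centre_in i : Us i (Y i).
Proof.
  destruct (Hchain i) as [He [_ [HU _]]]. apply HU. unfold qball.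
  rewrite (d_refl X d Hqm). lra.
Qed.

Lemma chain_split_unique i j k :
  splits k (Us i) (Us (S i)) -> splits k (Us j) (Us (S j)) -> i = j.
Proof.
  intros [Hi1 Hi2] [Hj1 Hj2].
  destruct (Nat.lt_trichotomy i j) as [Hlt | [Heq | Hgt]]; [exfalso | exact Heq | exfalso].
  - apply Hj2. intros z Hz. apply Hi1. apply (chain_nested (S i) j); [lia | exact Hz].
  - apply Hi2. intros z Hz. apply Hj1. apply (chain_nested (S j) i); [lia | exact Hz].
Qed.

Lemma chain_radius_small eps :
  0 < eps -> exists N, forall n, (N <= n)%nat -> subset (Us (S n)) (fun w => d (Y n) w <= eps).
Proof.
  intro Heps.
  destruct (pow_lt_1_zero (1/2) ltac:(rewrite Rabs_right; lra) eps Heps) as [M HM].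
  destruct (eventually_avoids (fun i k => splits k (Us i) (Us (S i)))
              (fun i j k => chain_split_unique i j k) M) as [N HN].
  exists N. intros n Hn w Hw.
  destruct (Hchain n) as [_ [HV [_ [Hzero | [k [Hsplit Hek]]]]]].
  - rewrite (Hzero w Hw). lra.
  - assert (HMk : (M <= k)%nat).
    { destruct (Compare_dec.le_lt_dec M k) as [H | H]; [exact H | exfalso].
      exact (HN n Hn k H Hsplit). }
    specialize (HM k HMk). rewrite Rabs_right in HM by (apply Rle_ge, pow_le; lra).
    specialize (HV w Hw). unfold qball in HV. lra.
Qed.

Lemma chain_centres_cauchy : qm_cauchy d Y.
Proof.
  intros eps Heps. destruct (chain_radius_small eps Heps) as [N HN]. exists N.
  intros n p Hn Hnp. destruct (Nat.eq_dec n p) as [-> | Hne].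
  - rewrite (d_refl X d Hqm). lra.
  - apply (HN n Hn). apply (chain_nested (S n) p); [lia | apply chain_centre_in].
Qed.

Section Limit.
Variable l : X.
Hypothesis Hlim : dhat_converges d Y l.

Lemma chain_limit_in i : Us i l.
Proof.
  destruct (Hchain i) as [He [HV [HU _]]]. apply HU. unfold qball.
  destruct (Hlim (E i) He) as [N HN].
  set (p := Nat.max N (S i)).
  assert (Hip : d (Y i) (Y p) < E i).
  { apply HV. apply (chain_nested (S i) p); [unfold p; lia | apply chain_centre_in]. }
  specialize (HN p ltac:(unfold p; lia)).
  pose proof (Rmax_l (d (Y p) l) (d l (Y p))).
  pose proof (d_tri X d Hqm (Y i) (Y p) l). lra.
Qed.

Lemma chain_limit_nbhd V : qm_open d V -> V l -> exists i, subset (Us i) V.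
Proof.
  intros HV Vl.
  destruct (qm_open_ball_around X d Hqm V l HV Vl) as [delta [Hdelta Hball]].
  destruct (chain_radius_small (delta / 2) ltac:(lra)) as [N1 HN1].
  destruct (Hlim (delta / 2) ltac:(lra)) as [N2 HN2].
  set (n := Nat.max N1 N2).
  exists (S n). intros w Hw. apply Hball. unfold qball.
  specialize (HN1 n ltac:(unfold n; lia) w Hw).
  specialize (HN2 n ltac:(unfold n; lia)).
  pose proof (Rmax_r (d (Y n) l) (d l (Y n))).
  pose proof (d_tri X d Hqm l (Y n) w). lra.
Qed.

End Limit.
End Chain.

Lemma approx_chain_converges (Us : nat -> X -> Prop) :
  qm_complete d -> (forall i, approx (Us i) (Us (S i))) ->
  exists l, (forall i, Us i l) /\
            (forall V, qm_open d V -> V l -> exists i, subset (Us i) V).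
Proof.
  intros Hcomplete Hll.
  destruct (functional_choice (fun i (p : X * R) => approx_at (Us i) (Us (S i)) (fst p) (snd p)))
    as [w Hw].
  { intro i. destruct (Hll i) as [y [e H]]. exists (y, e). exact H. }
  set (Y := fun i => fst (w i)). set (E := fun i => snd (w i)).
  destruct (Hcomplete Y (chain_centres_cauchy Us Y E Hw)) as [l Hl].
  exists l. split.
  - exact (chain_limit_in Us Y E Hw l Hl).
  - exact (chain_limit_nbhd Us Y E Hw l Hl).
Qed.

End Approximation.

Theorem theorem3p6 (X : Type) (open : (X -> Prop) -> Prop)
  (Htop : is_topology open) (Hqp : quasi_polish open) :
  convergent_approx_space open.
Proof.
  destruct Hqp as [[B0 [[HB0open HB0basis] [code Hcode]]] [d [Hqm [Hcomplete Hopen]]]].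
  set (C := code_set X B0 code).
  assert (HCopen : forall k, qm_open d (C k)).
  { intro k. apply code_set_open. intros W BW. apply Hopen, HB0open, BW. }
  assert (HCsep : forall x z, 0 < d x z -> exists k, C k x /\ ~ C k z).
  { apply (code_set_separates X d Hqm B0 code); [|exact Hcode].
    intros U x HU Ux. apply HB0basis; [apply Hopen, HU | exact Ux]. }
  exists open, (approx X d C).
  split; [split; [auto | intros U x HU Ux; exists U; repeat split; auto; intros z Hz; exact Hz]|].
  split; [intros U V _ _; apply approx_subset|].
  split; [intros U V T _ _ _; apply approx_enlarge|].
  split.
  - intros U x HU Ux.
    destruct (approx_interpolate X d Hqm C U x HCopen HCsep (proj1 (Hopen U) HU) Ux)
      as [W [HW [Wx HUW]]].
    exists W. split; [apply Hopen, HW | auto].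
  - intros Us HUs Hll.
    destruct (approx_chain_converges X d Hqm C Us Hcomplete Hll) as [l [Hin Hnbhd]].
    exists l. split; [exact Hin|]. split.
    + intro i. exists (Us i). repeat split; [apply HUs | apply Hin | intros z Hz; exact Hz].
    + intros V HV Vl. exact (Hnbhd V (proj1 (Hopen V) HV) Vl).
Qed.
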